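(* If $\gamma>-1/2$ and $\tau\in\mathbb{R}$, then the entire function $z\mapsto {}_1F_1(\gamma+i\tau;2\gamma+1;iz)e^{-iz/2}$ belongs to the Hermite–Biehler class.
   Context: The Hermite–Biehler class is the set of entire functions $E$ having no zeros in the upper half-plane $\{\operatorname{Im} z>0\}$ and satisfying $|E(z)|\ge|E(\bar z)|$ for $\operatorname{Im} z>0$. ${}_1F_1(\alpha;\beta;z)=\sum_{k\ge0}\frac{(\alpha)_k}{(\beta)_k}\frac{z^k}{k!}$ is the confluent hypergeometric function. *)

From Stdlib Require Import Reals.
From Coquelicot Require Import Coquelicot.
Open Scope C_scope.

Fixpoint poch (a : C) (k : nat) : C :=
  match k with
  | O => 1
  | S k' => poch a k' * (a + RtoC (INR k'))
  end.

Definition hyp1F1_term (a b z : C) (k : nat) : C :=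
  poch a k / poch b k * (z ^ k) / RtoC (INR (Factorial.fact k)).

Definition hyp1F1 (a b z : C) : C :=
  lim (T := C_CompleteNormedModule) (filtermap (sum_n (hyp1F1_term a b z)) eventually).

Definition cexp (w : C) : C :=
  (exp (Re w) * cos (Im w), exp (Re w) * sin (Im w))%R.

Definition entire (f : C -> C) : Prop :=
  forall z : C, @ex_derive C_AbsRing C_NormedModule f z.

Definition hermite_biehler (E : C -> C) : Prop :=
  entire E /\
  (forall z : C, (0 < Im z)%R -> E z <> 0) /\
  (forall z : C, (0 < Im z)%R -> (Cmod (E (Cconj z)) <= Cmod (E z))%R).

(** Write [a = gamma + i tau], [b = 2 gamma + 1] and [E(z) = 1F1(a;b;iz) e^(-iz/2)].
    Kummer's equation turns into [z E'' + b E' + (z/4 + tau + i/2) E = 0]. The combination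
    [G(z) = conj(a) E(z) + a conj(E(conj z))] has real Taylor coefficients, solves
    [z G'' + 2 gamma G' + (z/4 + tau) G = 0], and [G' = -i/2 (conj(a) E(z) - a conj(E(conj z)))], so that
    [Im (G'(z) conj(G(z))) = (|a E(conj z)|^2 - |a E(z)|^2) / 2].
    Along a ray [t |-> t z] with [Im z > 0], the quantity [t^(2 gamma) Im (G'(tz) conj(G(tz)))] has derivative
    [- t^(2 gamma) Im z (|G|^2/4 + |G'|^2) <= 0] and is [O(t^(2 gamma + 1))] at [0], since [G(0)] and
    [G'(0)] are real; as [2 gamma + 1 > 0] it is [<= 0] at [t = 1], and equality forces [G(0) = 2 gamma] and
    [G'(0) = - tau] to vanish. When [a = 0], [E(z) = e^(-iz/2)] directly. In all cases
    [|E(conj z)| < |E(z)|] for [Im z > 0], which gives both defining conditions.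
    All power series have coefficients bounded by [A B^n / n!]; such bounds give convergence,
    termwise differentiation and Cauchy products on all of C. *)

From Stdlib Require Import Reals Lra Lia Psatz.
From Coquelicot Require Import Coquelicot.
Local Open Scope R_scope.
Notation fact := Factorial.fact.

Lemma exp_le_compat (x y : R) : x <= y -> exp x <= exp y.
Proof. intros [H | ->]; [left; now apply exp_increasing | now right]. Qed.

Lemma is_series_ext_eq (u v : nat -> R) (U V : R) :
  (forall n, u n = v n) -> U = V -> is_series u U -> is_series v V.
Proof. intros Huv <-. apply is_series_ext, Huv. Qed.

Lemma is_series_lincomb (u v : nat -> R) (U V a b : R) :
  is_series u U -> is_series v V -> is_series (fun n => a * u n + b * v n) (a * U + b * V).
Proof. intros Hu Hv. exact (is_series_plus _ _ _ _ (is_series_scal a _ _ Hu) (is_series_scal b _ _ Hv)). Qed.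

Lemma sum_f_R0_lincomb (f g : nat -> R) (a b : R) (n : nat) :
  a * sum_f_R0 f n + b * sum_f_R0 g n = sum_f_R0 (fun k => a * f k + b * g k) n.
Proof. induction n; simpl; [ring | rewrite <- IHn; ring]. Qed.

Lemma is_series_exp_scal (A x : R) : is_series (fun n => A * x ^ n / INR (fact n)) (A * exp x).
Proof.
  pose proof (proj1 (is_pseries_R _ _ _) (is_exp_Reals x)) as Hexp.
  apply (is_series_scal A) in Hexp. revert Hexp. apply is_series_ext.
  intros n. change (A * (/ INR (fact n) * x ^ n) = A * x ^ n / INR (fact n)). unfold Rdiv. ring.
Qed.

Lemma is_series_dominated (u v : nat -> R) (V : R) :
  (forall n, Rabs (u n) <= v n) -> is_series v V ->
  ex_series (fun n => Rabs (u n)) /\ Rabs (Series u) <= V.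
Proof.
  intros Huv Hv.
  assert (Habs : ex_series (fun n => Rabs (u n))).
  { apply (ex_series_le (K := R_AbsRing) (V := R_CompleteNormedModule)) with v; [|now exists V].
    intros n. change (Rabs (Rabs (u n)) <= v n). now rewrite Rabs_Rabsolu. }
  split; [exact Habs|].
  eapply Rle_trans; [now apply Series_Rabs|].
  rewrite <- (is_series_unique _ _ Hv). apply Series_le; [|now exists V].
  intros n; split; [apply Rabs_pos | apply Huv].
Qed.

Lemma Im_le_Cmod (z : C) : Rabs (Im z) <= Cmod z.
Proof.
  destruct z as [p q]. pose proof (re_le_Cmod (q, p)) as H. unfold Cmod in *. cbn in *.
  now rewrite Rplus_comm.
Qed.

Lemma Cmod_le_Re_Im (z : C) : Cmod z <= Rabs (Re z) + Rabs (Im z).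
Proof.
  destruct z as [p q]. unfold Cmod, Re, Im; cbn [fst snd].
  pose proof (Rabs_pos p); pose proof (Rabs_pos q).
  rewrite <- (sqrt_pow2 (Rabs p + Rabs q)) by lra.
  apply sqrt_le_1_alt. rewrite <- (pow2_abs p), <- (pow2_abs q). nra.
Qed.

Lemma sum_n_Re (t : nat -> C) (n : nat) : Re (sum_n t n) = sum_n (fun k => Re (t k)) n.
Proof. induction n; [now rewrite !sum_O | now rewrite !sum_Sn, <- IHn]. Qed.

Lemma sum_n_Im (t : nat -> C) (n : nat) : Im (sum_n t n) = sum_n (fun k => Im (t k)) n.
Proof. induction n; [now rewrite !sum_O | now rewrite !sum_Sn, <- IHn]. Qed.

Definition is_Cseries (t : nat -> C) (l : C) : Prop :=
  is_series (fun n => Re (t n)) (Re l) /\ is_series (fun n => Im (t n)) (Im l).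

Section ComplexSeries.

Implicit Types (t s : nat -> C).

Lemma is_Cseries_ext t s (l l' : C) : (forall n, t n = s n) -> l = l' -> is_Cseries t l -> is_Cseries s l'.
Proof. intros Hts <- [Hre Him]. split; [revert Hre | revert Him]; apply is_series_ext; intros n; now rewrite Hts. Qed.

Lemma is_Cseries_plus t s (l l' : C) :
  is_Cseries t l -> is_Cseries s l' -> is_Cseries (fun n => t n + s n)%C (l + l')%C.
Proof.
  intros [Hre Him] [Hre' Him'].
  split; [revert Hre Hre' | revert Him Him']; intros H H'; exact (is_series_plus _ _ _ _ H H').
Qed.

Lemma is_Cseries_scal (k : C) t (l : C) : is_Cseries t l -> is_Cseries (fun n => k * t n)%C (k * l)%C.
Proof.
  intros [Hre Him]. split.
  - generalize (is_series_lincomb _ _ _ _ (Re k) (- Im k) Hre Him).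
    apply is_series_ext_eq; [intros n|]; unfold Re, Im; simpl; ring.
  - generalize (is_series_lincomb _ _ _ _ (Im k) (Re k) Hre Him).
    apply is_series_ext_eq; [intros n|]; unfold Re, Im; simpl; ring.
Qed.

Lemma is_Cseries_conj t (l : C) : is_Cseries t l -> is_Cseries (fun n => Cconj (t n)) (Cconj l).
Proof.
  intros [Hre Him]. split; [exact Hre|].
  generalize (is_series_scal (-1) _ _ Him). apply is_series_ext_eq; [intros n|]; unfold Re, Im; simpl;
  change (scal (-1) ?x) with (-1 * x); ring.
Qed.

Lemma is_Cseries_unique t (l l' : C) : is_Cseries t l -> is_Cseries t l' -> l = l'.
Proof.
  intros [Hre Him] [Hre' Him']. destruct l as [p q], l' as [p' q'].
  apply is_series_unique in Hre, Him, Hre', Him'. simpl in *. congruence.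
Qed.

Lemma is_Cseries_null t (l : C) : (forall n, t n = RtoC 0) -> is_Cseries t l -> l = RtoC 0.
Proof.
  intros H0 Hl. apply (is_Cseries_unique t); [exact Hl|].
  generalize (is_Cseries_scal (RtoC 0) t l Hl). apply is_Cseries_ext; [intros n; rewrite H0 |]; ring.
Qed.

Lemma is_Cseries_incr_1 t (l : C) : is_Cseries (fun n => t (S n)) (l - t O)%C -> is_Cseries t l.
Proof. intros [Hre Him]. split; apply is_series_decr_1; [exact Hre | exact Him]. Qed.

Lemma is_Cseries_dominated t (v : nat -> R) (V : R) :
  (forall n, Cmod (t n) <= v n) -> is_series v V ->
  ex_series (fun n => Rabs (Re (t n))) /\ ex_series (fun n => Rabs (Im (t n))) /\
  is_Cseries t (Series (fun n => Re (t n)), Series (fun n => Im (t n))) /\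
  Cmod (Series (fun n => Re (t n)), Series (fun n => Im (t n))) <= 2 * V.
Proof.
  intros Htv Hv.
  destruct (is_series_dominated (fun n => Re (t n)) v V) as [Hre Bre]; [|exact Hv|].
  { intros n. eapply Rle_trans; [apply re_le_Cmod | apply Htv]. }
  destruct (is_series_dominated (fun n => Im (t n)) v V) as [Him Bim]; [|exact Hv|].
  { intros n. eapply Rle_trans; [apply Im_le_Cmod | apply Htv]. }
  repeat split; try assumption.
  - now apply Series_correct, ex_series_Rabs.
  - now apply Series_correct, ex_series_Rabs.
  - eapply Rle_trans; [apply Cmod_le_Re_Im|]. simpl. lra.
Qed.

Lemma is_Cseries_norm_le t (l : C) (v : nat -> R) (V : R) :
  (forall n, Cmod (t n) <= v n) -> is_series v V -> is_Cseries t l -> Cmod l <= 2 * V.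
Proof.
  intros Htv Hv Hl. destruct (is_Cseries_dominated t v V Htv Hv) as (_ & _ & Hl' & Hle).
  now rewrite (is_Cseries_unique _ _ _ Hl Hl').
Qed.

Lemma lim_sum_n_C t (l : C) :
  is_Cseries t l -> lim (T := C_CompleteNormedModule) (filtermap (sum_n t) eventually) = l.
Proof.
  intros [Hre Him].
  set (F := filtermap (sum_n t) eventually).
  assert (FP : ProperFilter F) by apply filtermap_proper_filter, eventually_filter.
  assert (Fball : forall eps : posreal, F (ball (M := C_UniformSpace) l eps)).
  { intros eps.
    destruct (Hre _ (locally_ball (Re l) eps)) as [N1 HN1].
    destruct (Him _ (locally_ball (Im l) eps)) as [N2 HN2].
    exists (max N1 N2). intros n Hn. split.
    - change (ball (Re l) eps (Re (sum_n t n))). rewrite sum_n_Re. apply HN1. lia.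
    - change (ball (Im l) eps (Im (sum_n t n))). rewrite sum_n_Im. apply HN2. lia. }
  assert (Fl : is_filter_lim F l).
  { intros P [eps HP]. exact (filter_imp _ _ HP (Fball eps)). }
  assert (Flim : is_filter_lim F (lim (T := C_CompleteNormedModule) F)).
  { intros P [eps HP]. apply (filter_imp _ _ HP). apply (complete_cauchy (T := C_CompleteNormedModule)); [exact FP|].
    intros e. exists l. apply Fball. }
  exact (is_filter_lim_unique (K := C_AbsRing) (V := C_NormedModule) _ _ Flim Fl).
Qed.

End ComplexSeries.

(* Coquelicot's [sum_n] lemmas restated with [Cplus] and [Cmult], so that [ring] applies. *)
Lemma sum_n_C_Sn (a : nat -> C) (n : nat) : sum_n a (S n) = (sum_n a n + a (S n))%C.
Proof. exact (sum_Sn a n). Qed.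

Lemma sum_n_C_Sn_l (a : nat -> C) (n : nat) : sum_n a (S n) = (a O + sum_n (fun k => a (S k)) n)%C.
Proof. unfold sum_n. rewrite sum_n_m_S. exact (sum_Sn_m a 0 (S n) (Nat.le_0_l _)). Qed.

Lemma sum_n_C_ext (a b : nat -> C) (n : nat) :
  (forall k, (k <= n)%nat -> a k = b k) -> sum_n a n = sum_n b n.
Proof. exact (sum_n_ext_loc a b n). Qed.

Lemma sum_n_C_plus (a b : nat -> C) (n : nat) :
  sum_n (fun k => a k + b k)%C n = (sum_n a n + sum_n b n)%C.
Proof. exact (sum_n_plus a b n). Qed.

Lemma sum_n_C_scal (x : C) (a : nat -> C) (n : nat) : sum_n (fun k => x * a k)%C n = (x * sum_n a n)%C.
Proof. exact (sum_n_mult_l x a n). Qed.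

Lemma Cmod_sum_n (a : nat -> C) (n : nat) : Cmod (sum_n a n) <= sum_n (fun k => Cmod (a k)) n.
Proof.
  induction n.
  - rewrite !sum_O. lra.
  - rewrite sum_n_C_Sn, sum_Sn. change (plus ?x ?y) with (x + y).
    eapply Rle_trans; [apply Cmod_triangle | lra].
Qed.

Definition fact_bounded (c : nat -> C) (A B : R) : Prop :=
  0 <= A /\ 0 <= B /\ forall n, Cmod (c n) <= A * B ^ n / INR (fact n).

(** * Power series with factorially bounded coefficients *)

(* The value is junk unless the series converges, as it does under [fact_bounded]. *)
Definition CPSeries (c : nat -> C) (w : C) : C :=
  (Series (fun n => Re (c n * w ^ n)%C), Series (fun n => Im (c n * w ^ n)%C)).

Definition is_CPSeries (c : nat -> C) (w l : C) : Prop := is_Cseries (fun n => c n * w ^ n)%C l.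

Definition CPS_incr_1 (c : nat -> C) (n : nat) : C := match n with O => RtoC 0 | S m => c m end.
Definition CPS_decr_1 (c : nat -> C) (n : nat) : C := c (S n).
Definition CPS_derive (c : nat -> C) (n : nat) : C := (RtoC (INR (S n)) * c (S n))%C.
Definition CPS_mult (a b : nat -> C) (n : nat) : C := sum_n (fun k => a k * b (n - k)%nat)%C n.

Lemma INR_fact_pos (n : nat) : 0 < INR (fact n).
Proof. apply INR_fact_lt_0. Qed.

Section FactBounded.

Implicit Types (c d : nat -> C).

Lemma fact_bounded_ext c d A B : (forall n, c n = d n) -> fact_bounded c A B -> fact_bounded d A B.
Proof. intros E (HA & HB & Hc). repeat split; auto. intros n. rewrite <- E. auto. Qed.

Lemma fact_bounded_term c A B (w : C) (n : nat) : fact_bounded c A B ->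
  Cmod (c n * w ^ n)%C <= A * (B * Cmod w) ^ n / INR (fact n).
Proof.
  intros (_ & _ & Hc). rewrite Cmod_mult, Cmod_pow, Rpow_mult_distr.
  pose proof (pow_le (Cmod w) n (Cmod_ge_0 w)).
  eapply Rle_trans; [apply Rmult_le_compat_r; [assumption | apply Hc]|]. right. unfold Rdiv. ring.
Qed.

Lemma fact_bounded_scal (k : C) c A B : fact_bounded c A B -> fact_bounded (fun n => k * c n)%C (Cmod k * A) B.
Proof.
  intros (HA & HB & Hc). pose proof (Cmod_ge_0 k). repeat split; [nra | lra |]. intros n.
  rewrite Cmod_mult. eapply Rle_trans; [apply Rmult_le_compat_l; eauto|]. right. unfold Rdiv; ring.
Qed.

Lemma fact_bounded_conj c A B : fact_bounded c A B -> fact_bounded (fun n => Cconj (c n)) A B.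
Proof. intros (HA & HB & Hc). repeat split; auto. intros n. rewrite Cmod_conj. auto. Qed.

Lemma fact_bounded_plus c d A B A' B' : fact_bounded c A B -> fact_bounded d A' B' ->
  fact_bounded (fun n => c n + d n)%C (A + A') (Rmax B B').
Proof.
  intros (HA & HB & Hc) (HA' & HB' & Hd). pose proof (Rmax_l B B'). pose proof (Rmax_r B B').
  repeat split; [lra | lra |]. intros n.
  eapply Rle_trans; [apply Cmod_triangle|].
  pose proof (pow_incr B (Rmax B B') n ltac:(lra)). pose proof (pow_incr B' (Rmax B B') n ltac:(lra)).
  pose proof (Rinv_0_lt_compat _ (INR_fact_pos n)).
  specialize (Hc n). specialize (Hd n). unfold Rdiv in *.
  assert (A * B ^ n <= A * Rmax B B' ^ n) by (apply Rmult_le_compat_l; lra).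
  assert (A' * B' ^ n <= A' * Rmax B B' ^ n) by (apply Rmult_le_compat_l; lra).
  nra.
Qed.

Lemma fact_bounded_geom c A B (u : C) : fact_bounded c A B -> Cmod u <= 1 ->
  fact_bounded (fun n => c n * u ^ n)%C A B.
Proof.
  intros (HA & HB & Hc) Hu. repeat split; auto. intros n. rewrite Cmod_mult, Cmod_pow.
  pose proof (pow_le (Cmod u) n (Cmod_ge_0 u)). pose proof (pow_incr (Cmod u) 1 n (conj (Cmod_ge_0 u) Hu)).
  rewrite pow1 in *. pose proof (Cmod_ge_0 (c n)). specialize (Hc n). nra.
Qed.

Lemma fact_bounded_decr_1 c A B : fact_bounded c A B -> fact_bounded (CPS_decr_1 c) (A * B) B.
Proof.
  intros (HA & HB & Hc). repeat split; [nra | lra |]. intros n. unfold CPS_decr_1.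
  specialize (Hc (S n)). rewrite fact_simpl, mult_INR, S_INR in Hc.
  pose proof (INR_fact_pos n). pose proof (pos_INR n). pose proof (pow_le B n ltac:(lra)).
  eapply Rle_trans; [exact Hc|]. simpl pow.
  apply Rmult_le_reg_r with ((INR n + 1) * INR (fact n)); [nra|].
  assert (0 <= A * B * B ^ n) by (repeat apply Rmult_le_pos; lra).
  field_simplify; [nra | lra | lra].
Qed.

Lemma fact_bounded_derive c A B : fact_bounded c A B -> fact_bounded (CPS_derive c) (A * B) B.
Proof.
  intros (HA & HB & Hc). repeat split; [nra | lra |]. intros n. unfold CPS_derive.
  rewrite Cmod_mult, Cmod_R, Rabs_right by (apply Rle_ge, pos_INR).
  specialize (Hc (S n)). rewrite fact_simpl, mult_INR in Hc.
  pose proof (INR_fact_pos n). pose proof (lt_0_INR (S n) (Nat.lt_0_succ n)).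
  apply Rmult_le_compat_l with (r := INR (S n)) in Hc; [|lra].
  eapply Rle_trans; [exact Hc|]. right. simpl pow. field. lra.
Qed.

Lemma binomial_fact (B B' : R) (n : nat) :
  sum_f_R0 (fun k => B ^ k / INR (fact k) * (B' ^ (n - k) / INR (fact (n - k)))) n = (B + B') ^ n / INR (fact n).
Proof.
  rewrite binomial. unfold Rdiv. rewrite (Rmult_comm (sum_f_R0 _ n)), scal_sum.
  apply sum_eq. intros i Hi. unfold Binomial.C.
  pose proof (INR_fact_neq_0 i). pose proof (INR_fact_neq_0 n). pose proof (INR_fact_neq_0 (n - i)).
  field. auto.
Qed.

Lemma fact_bounded_mult c d A B A' B' : fact_bounded c A B -> fact_bounded d A' B' ->
  fact_bounded (CPS_mult c d) (A * A') (B + B').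
Proof.
  intros (HA & HB & Hc) (HA' & HB' & Hd). repeat split; [nra | lra |]. intros n.
  eapply Rle_trans; [apply Cmod_sum_n|]. rewrite sum_n_Reals.
  eapply Rle_trans.
  - apply sum_Rle with (Bn := fun k => B ^ k / INR (fact k) * (B' ^ (n - k) / INR (fact (n - k))) * (A * A')).
    intros k _. rewrite Cmod_mult.
    eapply Rle_trans; [apply Rmult_le_compat; [apply Cmod_ge_0 | apply Cmod_ge_0 | apply Hc | apply Hd]|].
    right. unfold Rdiv. ring.
  - rewrite <- scal_sum, binomial_fact. right. unfold Rdiv. ring.
Qed.

End FactBounded.

Section EntireSeries.

Implicit Types (c d : nat -> C) (w : C).

Lemma CPSeries_abs_conv c A B w : fact_bounded c A B ->
  ex_series (fun n => Rabs (Re (c n * w ^ n)%C)) /\ ex_series (fun n => Rabs (Im (c n * w ^ n)%C)) /\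
  is_CPSeries c w (CPSeries c w) /\ Cmod (CPSeries c w) <= 2 * (A * exp (B * Cmod w)).
Proof.
  intros Hc. apply is_Cseries_dominated with (v := fun n => A * (B * Cmod w) ^ n / INR (fact n)).
  - intros n. now apply fact_bounded_term.
  - apply is_series_exp_scal.
Qed.

Lemma is_CPSeries_CPSeries c A B w : fact_bounded c A B -> is_CPSeries c w (CPSeries c w).
Proof. intros Hc. apply (CPSeries_abs_conv c A B w Hc). Qed.

Lemma CPSeries_norm_le c A B w : fact_bounded c A B -> Cmod (CPSeries c w) <= 2 * (A * exp (B * Cmod w)).
Proof. intros Hc. apply (CPSeries_abs_conv c A B w Hc). Qed.

Lemma CPSeries_unique c w (l : C) : is_CPSeries c w l -> CPSeries c w = l.
Proof.
  intros [Hre Him]. destruct l as [p q]. unfold CPSeries. f_equal; now apply is_series_unique.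
Qed.

Lemma CPSeries_ext c d w : (forall n, c n = d n) -> CPSeries c w = CPSeries d w.
Proof. intros E. unfold CPSeries. f_equal; apply Series_ext; intros n; now rewrite E. Qed.

Lemma CPSeries_scal_arg c (u : C) w : CPSeries c (u * w)%C = CPSeries (fun n => c n * u ^ n)%C w.
Proof. unfold CPSeries. f_equal; apply Series_ext; intros n; now rewrite Cpow_mult_l, Cmult_assoc. Qed.

Lemma is_CPSeries_incr_1 c w (l : C) : is_CPSeries c w l -> is_CPSeries (CPS_incr_1 c) w (w * l)%C.
Proof.
  intros H. apply is_Cseries_incr_1. apply (is_Cseries_scal w) in H. revert H.
  apply is_Cseries_ext; [intros n | ]; simpl; ring.
Qed.

Lemma is_CPSeries_decr_1 c w (l : C) : is_CPSeries (CPS_decr_1 c) w l -> is_CPSeries c w (c O + w * l)%C.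
Proof.
  intros H. apply is_Cseries_incr_1. apply (is_Cseries_scal w) in H. revert H.
  apply is_Cseries_ext; [intros n; unfold CPS_decr_1 | ]; simpl; ring.
Qed.

Lemma CPSeries_decr_1 c A B w : fact_bounded c A B -> CPSeries c w = (c O + w * CPSeries (CPS_decr_1 c) w)%C.
Proof.
  intros Hc. apply CPSeries_unique, is_CPSeries_decr_1.
  exact (is_CPSeries_CPSeries _ _ _ w (fact_bounded_decr_1 _ _ _ Hc)).
Qed.

Lemma CPSeries_0 c A B : fact_bounded c A B -> CPSeries c (RtoC 0) = c O.
Proof. intros Hc. rewrite (CPSeries_decr_1 c A B _ Hc). ring. Qed.

Lemma CPSeries_const c A B w : fact_bounded c A B -> (forall n, c (S n) = RtoC 0) -> CPSeries c w = c O.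
Proof.
  intros Hc H0. rewrite (CPSeries_decr_1 c A B w Hc).
  assert (Hterms : forall n, (CPS_decr_1 c n * w ^ n)%C = RtoC 0) by (intros n; unfold CPS_decr_1; rewrite H0; ring).
  rewrite (is_Cseries_null _ _ Hterms (is_CPSeries_CPSeries _ _ _ w (fact_bounded_decr_1 _ _ _ Hc))). ring.
Qed.

Lemma CPSeries_sub_0_le c A B (r : R) : fact_bounded c A B ->
  exists K, 0 <= K /\ forall w, Cmod w <= r -> Cmod (CPSeries c w - c O)%C <= K * Cmod w.
Proof.
  intros Hc. pose proof (fact_bounded_decr_1 _ _ _ Hc) as Hd. destruct Hd as (HA & HB & _).
  exists (2 * (A * B * exp (B * r))). split.
  { pose proof (exp_pos (B * r)). apply Rmult_le_pos; [lra|]. apply Rmult_le_pos; [exact HA | lra]. }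
  intros w Hw. rewrite (CPSeries_decr_1 c A B w Hc).
  replace (c O + w * CPSeries (CPS_decr_1 c) w - c O)%C with (w * CPSeries (CPS_decr_1 c) w)%C by ring.
  rewrite Cmod_mult, Rmult_comm. apply Rmult_le_compat_r; [apply Cmod_ge_0|].
  eapply Rle_trans; [apply (CPSeries_norm_le _ _ _ w (fact_bounded_decr_1 _ _ _ Hc))|].
  apply Rmult_le_compat_l; [lra|]. apply Rmult_le_compat_l; [exact HA|].
  apply exp_le_compat. apply Rmult_le_compat_l; lra.
Qed.

Lemma is_CPSeries_mult c d A B A' B' w : fact_bounded c A B -> fact_bounded d A' B' ->
  is_CPSeries (CPS_mult c d) w (CPSeries c w * CPSeries d w)%C.
Proof.
  intros Hc Hd.
  set (p := fun k => (c k * w ^ k)%C). set (q := fun k => (d k * w ^ k)%C).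
  assert (E : forall n, (CPS_mult c d n * w ^ n)%C = sum_n (fun k => p k * q (n - k)%nat)%C n).
  { intros n. unfold CPS_mult. rewrite Cmult_comm, <- sum_n_C_scal. apply sum_n_C_ext.
    intros k Hk. unfold p, q. rewrite <- (Nat.sub_add k n Hk) at 1. rewrite Cpow_add_r. ring. }
  destruct (CPSeries_abs_conv c A B w Hc) as (Ac1 & Ac2 & [Pc1 Pc2] & _).
  destruct (CPSeries_abs_conv d A' B' w Hd) as (Ad1 & Ad2 & [Pd1 Pd2] & _).
  pose proof (is_series_mult _ _ _ _ Pc1 Pd1 Ac1 Ad1) as M11.
  pose proof (is_series_mult _ _ _ _ Pc2 Pd2 Ac2 Ad2) as M22.
  pose proof (is_series_mult _ _ _ _ Pc1 Pd2 Ac1 Ad2) as M12.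
  pose proof (is_series_mult _ _ _ _ Pc2 Pd1 Ac2 Ad1) as M21.
  split.
  - generalize (is_series_lincomb _ _ _ _ 1 (-1) M11 M22). apply is_series_ext_eq.
    + intros n. rewrite E, sum_n_Re, sum_n_Reals, sum_f_R0_lincomb.
      apply sum_eq. intros i _. fold (p i) (q (n - i)%nat). rewrite re_mult. ring.
    + rewrite re_mult. ring.
  - generalize (is_series_lincomb _ _ _ _ 1 1 M12 M21). apply is_series_ext_eq.
    + intros n. rewrite E, sum_n_Im, sum_n_Reals, sum_f_R0_lincomb.
      apply sum_eq. intros i _. fold (p i) (q (n - i)%nat). rewrite im_mult. ring.
    + rewrite im_mult. ring.
Qed.

End EntireSeries.

Lemma INR_le_pow2 (n : nat) : INR n <= 2 ^ n.
Proof.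
  induction n; [simpl; lra|]. rewrite S_INR. simpl.
  pose proof (pow_R1_Rle 2 n ltac:(lra)). lra.
Qed.

Lemma Cpow_taylor1_le (w h : C) (rho : R) (n : nat) : 1 <= rho -> Cmod w + Cmod h <= rho ->
  Cmod ((w + h) ^ n - w ^ n - RtoC (INR n) * w ^ pred n * h)%C <= INR n * INR n * rho ^ n * Cmod h ^ 2.
Proof.
  intros Hrho Hwh. induction n as [|n IH].
  - replace ((w + h) ^ 0 - w ^ 0 - RtoC (INR 0) * w ^ pred 0 * h)%C with (RtoC 0) by (simpl; ring).
    rewrite Cmod_0. simpl. lra.
  - set (D := ((w + h) ^ n - w ^ n - RtoC (INR n) * w ^ pred n * h)%C) in IH.
    assert (Drec : ((w + h) ^ S n - w ^ S n - RtoC (INR (S n)) * w ^ pred (S n) * h)%C =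
                   ((w + h) * D + RtoC (INR n) * w ^ pred n * h * h)%C).
    { unfold D. destruct n; [simpl; ring|]. cbn [pred]. rewrite !S_INR, !RtoC_plus. simpl. ring. }
    rewrite Drec. eapply Rle_trans; [apply Cmod_triangle|].
    rewrite !Cmod_mult, Cmod_R, Rabs_right, Cmod_pow by (apply Rle_ge, pos_INR).
    pose proof (Cmod_ge_0 w). pose proof (Cmod_ge_0 h). pose proof (Cmod_ge_0 D). pose proof (pos_INR n).
    assert (E1 : Cmod (w + h) <= rho) by (eapply Rle_trans; [apply Cmod_triangle | lra]).
    assert (E2 : Cmod w ^ pred n <= rho ^ S n).
    { apply Rle_trans with (rho ^ pred n); [apply pow_incr; lra | apply Rle_pow; [lra | lia]]. }
    pose proof (pow_le rho n ltac:(lra)). pose proof (pow_le (Cmod w) (pred n) ltac:(lra)).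
    assert (E3 : Cmod (w + h) * Cmod D <= rho * (INR n * INR n * rho ^ n * Cmod h ^ 2))
      by (apply Rmult_le_compat; auto using Cmod_ge_0).
    assert (E4 : INR n * Cmod w ^ pred n * Cmod h * Cmod h <= INR n * rho ^ S n * Cmod h ^ 2).
    { replace (INR n * Cmod w ^ pred n * Cmod h * Cmod h) with ((INR n * Cmod h ^ 2) * Cmod w ^ pred n) by ring.
      replace (INR n * rho ^ S n * Cmod h ^ 2) with ((INR n * Cmod h ^ 2) * rho ^ S n) by ring.
      apply Rmult_le_compat_l; [apply Rmult_le_pos; [lra | apply pow2_ge_0] | exact E2]. }
    rewrite S_INR. simpl pow in *.
    assert (0 <= INR n * rho * rho ^ n * (Cmod h * (Cmod h * 1))) by (repeat apply Rmult_le_pos; lra).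
    nra.
Qed.

Lemma CPSeries_taylor1_le (c : nat -> C) (A B : R) (w h : C) : fact_bounded c A B -> Cmod h <= 1 ->
  Cmod (CPSeries c (w + h) - CPSeries c w - h * CPSeries (CPS_derive c) w)%C
    <= 2 * (A * exp (4 * B * (Cmod w + 1))) * Cmod h ^ 2.
Proof.
  intros Hc Hh. pose proof Hc as (HA & HB & Hcn).
  set (rho := Cmod w + 1).
  assert (Hderiv : is_Cseries (fun n => RtoC (INR n) * c n * w ^ pred n)%C (CPSeries (CPS_derive c) w)).
  { apply is_Cseries_incr_1.
    generalize (is_CPSeries_CPSeries _ _ _ w (fact_bounded_derive _ _ _ Hc)).
    apply is_Cseries_ext; [reflexivity | simpl; ring]. }
  assert (Hsum : is_Cseries (fun n => c n * ((w + h) ^ n - w ^ n - RtoC (INR n) * w ^ pred n * h))%C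
                   (CPSeries c (w + h) - CPSeries c w - h * CPSeries (CPS_derive c) w)%C).
  { generalize (is_Cseries_plus _ _ _ _
      (is_Cseries_plus _ _ _ _ (is_CPSeries_CPSeries c A B (w + h) Hc)
                               (is_Cseries_scal (RtoC (-1)) _ _ (is_CPSeries_CPSeries c A B w Hc)))
      (is_Cseries_scal (- h)%C _ _ Hderiv)).
    apply is_Cseries_ext; [intros n|]; ring. }
  replace (2 * (A * exp (4 * B * rho)) * Cmod h ^ 2) with (2 * (Cmod h ^ 2 * A * exp (4 * B * rho))) by ring.
  refine (is_Cseries_norm_le _ _ (fun n => (Cmod h ^ 2 * A) * (4 * B * rho) ^ n / INR (fact n))
           (Cmod h ^ 2 * A * exp (4 * B * rho)) _ (is_series_exp_scal _ _) Hsum).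
  intros n. rewrite Cmod_mult.
  assert (Hrho : 1 <= rho) by (unfold rho; pose proof (Cmod_ge_0 w); lra).
  eapply Rle_trans; [apply Rmult_le_compat; [apply Cmod_ge_0 | apply Cmod_ge_0 | apply Hcn |
                                             exact (Cpow_taylor1_le w h rho n Hrho ltac:(unfold rho; lra))]|].
  assert (Hn4 : INR n * INR n <= 4 ^ n).
  { replace 4 with (2 * 2) by ring. rewrite Rpow_mult_distr.
    pose proof (INR_le_pow2 n). pose proof (pos_INR n). apply Rmult_le_compat; lra. }
  pose proof (Rinv_0_lt_compat _ (INR_fact_pos n)).
  assert (0 <= A * B ^ n * / INR (fact n) * rho ^ n * Cmod h ^ 2).
  { pose proof (pow_le B n HB). pose proof (pow_le rho n ltac:(lra)). pose proof (pow2_ge_0 (Cmod h)).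
    apply Rmult_le_pos; [|lra]. apply Rmult_le_pos; [|lra]. repeat apply Rmult_le_pos; lra. }
  rewrite !Rpow_mult_distr. unfold Rdiv.
  replace (A * B ^ n * / INR (fact n) * (INR n * INR n * rho ^ n * Cmod h ^ 2))
    with ((A * B ^ n * / INR (fact n) * rho ^ n * Cmod h ^ 2) * (INR n * INR n)) by ring.
  replace (Cmod h ^ 2 * A * (4 ^ n * B ^ n * rho ^ n) * / INR (fact n))
    with ((A * B ^ n * / INR (fact n) * rho ^ n * Cmod h ^ 2) * 4 ^ n) by ring.
  now apply Rmult_le_compat_l.
Qed.

Lemma is_derive_of_quadratic_error (f : R -> R) (t l K d0 : R) : 0 <= K -> 0 < d0 ->
  (forall h, Rabs h < d0 -> Rabs (f (t + h) - f t - h * l) <= K * h ^ 2) -> is_derive f t l.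
Proof.
  intros HK Hd0 Hf. apply is_derive_Reals. intros eps Heps.
  assert (Hd : 0 < Rmin d0 (eps / (K + 1))) by (apply Rmin_pos; [lra | apply Rdiv_lt_0_compat; lra]).
  exists (mkposreal _ Hd). intros h Hh0 Hh. simpl in Hh.
  pose proof (Rmin_l d0 (eps / (K + 1))). pose proof (Rmin_r d0 (eps / (K + 1))).
  specialize (Hf h ltac:(lra)).
  assert (Hh1 : Rabs h * (K + 1) < eps).
  { apply Rmult_lt_reg_r with (/ (K + 1)); [apply Rinv_0_lt_compat; lra|].
    rewrite Rmult_assoc, Rinv_r, Rmult_1_r by lra. fold (Rdiv eps (K + 1)). lra. }
  pose proof (Rabs_pos_lt h Hh0).
  replace ((f (t + h) - f t) / h - l) with ((f (t + h) - f t - h * l) / h) by (field; exact Hh0).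
  unfold Rdiv. rewrite Rabs_mult, Rabs_inv.
  rewrite <- (pow2_abs h) in Hf.
  apply Rle_lt_trans with (K * Rabs h); [|nra].
  apply Rmult_le_reg_r with (Rabs h); [lra|]. rewrite Rmult_assoc, Rinv_l, Rmult_1_r by lra. nra.
Qed.

Lemma is_derive_C_of_quadratic_error (f : C -> C) (w l : C) (K : R) : 0 <= K ->
  (forall h, Cmod h <= 1 -> Cmod (f (w + h) - f w - h * l)%C <= K * Cmod h ^ 2) ->
  @is_derive C_AbsRing C_NormedModule f w l.
Proof.
  intros HK Hf. split; [apply is_linear_scal_l|].
  intros x Hx. rewrite <- (@is_filter_lim_locally_unique C_AbsRing (AbsRing_NormedModule C_AbsRing) w x Hx).
  intros eps.
  assert (Hd : 0 < Rmin (1 / 2) (eps / (2 * K + 2)))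
    by (apply Rmin_pos; [lra | apply Rdiv_lt_0_compat; [apply cond_pos | lra]]).
  exists (mkposreal _ Hd). intros y Hy.
  change (Cmod (minus y w) < Rmin (1 / 2) (eps / (2 * K + 2))) in Hy.
  change (Cmod (f y - f w - minus y w * l)%C <= eps * Cmod (minus y w)).
  set (h := minus y w) in *.
  replace y with (w + h)%C by (unfold h, minus, plus, opp; simpl; ring).
  pose proof (Rmin_l (1 / 2) (eps / (2 * K + 2))). pose proof (Rmin_r (1 / 2) (eps / (2 * K + 2))).
  assert (Hh : Cmod h * (2 * K + 2) <= eps).
  { apply Rmult_le_reg_r with (/ (2 * K + 2)); [apply Rinv_0_lt_compat; lra|].
    rewrite Rmult_assoc, Rinv_r, Rmult_1_r by lra. fold (Rdiv eps (2 * K + 2)). lra. }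
  eapply Rle_trans; [apply Hf; lra|].
  pose proof (Cmod_ge_0 h). destruct eps as [e He]. simpl in *. nra.
Qed.

Section Derivatives.

Variables (c : nat -> C) (A B : R).
Hypothesis Hc : fact_bounded c A B.

Lemma is_derive_CPSeries (w : C) :
  @is_derive C_AbsRing C_NormedModule (CPSeries c) w (CPSeries (CPS_derive c) w).
Proof.
  apply is_derive_C_of_quadratic_error with (2 * (A * exp (4 * B * (Cmod w + 1)))).
  - destruct Hc as (HA & _). pose proof (exp_pos (4 * B * (Cmod w + 1))). nra.
  - intros h Hh. now apply CPSeries_taylor1_le.
Qed.

Lemma is_derive_CPSeries_ray (z : C) (t : R) :
  is_derive (fun s : R => Re (CPSeries c (RtoC s * z))) t (Re (z * CPSeries (CPS_derive c) (RtoC t * z))) /\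
  is_derive (fun s : R => Im (CPSeries c (RtoC s * z))) t (Im (z * CPSeries (CPS_derive c) (RtoC t * z))).
Proof.
  set (w := (RtoC t * z)%C).
  set (K := 2 * (A * exp (4 * B * (Cmod w + 1))) * Cmod z ^ 2).
  assert (HK : 0 <= K).
  { destruct Hc as (HA & _). pose proof (exp_pos (4 * B * (Cmod w + 1))).
    apply Rmult_le_pos; [nra | apply pow2_ge_0]. }
  assert (Hd : 0 < / (Cmod z + 1)) by (apply Rinv_0_lt_compat; pose proof (Cmod_ge_0 z); lra).
  assert (Herr : forall h, Rabs h < / (Cmod z + 1) ->
     Cmod (CPSeries c (RtoC (t + h) * z) - CPSeries c w - RtoC h * (z * CPSeries (CPS_derive c) w))%C <= K * h ^ 2).
  { intros h Hh.
    replace (CPSeries c (RtoC (t + h) * z) - CPSeries c w - RtoC h * (z * CPSeries (CPS_derive c) w))%C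
      with (CPSeries c (w + RtoC h * z) - CPSeries c w - (RtoC h * z) * CPSeries (CPS_derive c) w)%C
      by (unfold w; rewrite RtoC_plus, Cmult_plus_distr_r; ring).
    eapply Rle_trans; [apply CPSeries_taylor1_le; [exact Hc|]|].
    - rewrite Cmod_mult, Cmod_R. pose proof (Cmod_ge_0 z).
      apply Rmult_lt_compat_r with (r := Cmod z + 1) in Hh; [|lra]. rewrite Rinv_l in Hh by lra.
      pose proof (Rabs_pos h). nra.
    - unfold K. rewrite Cmod_mult, Cmod_R, <- (pow2_abs h). right. ring. }
  split; apply is_derive_of_quadratic_error with K (/ (Cmod z + 1)); auto; intros h Hh.
  - eapply Rle_trans; [|apply (Herr h Hh)]. eapply Rle_trans; [|apply re_le_Cmod].
    right. f_equal. unfold w.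
    generalize (CPSeries c (RtoC (t + h) * z)) (CPSeries c (RtoC t * z)) (CPSeries (CPS_derive c) (RtoC t * z)).
    intros p q r. unfold Re, Im. simpl. ring.
  - eapply Rle_trans; [|apply (Herr h Hh)]. eapply Rle_trans; [|apply Im_le_Cmod].
    right. f_equal. unfold w.
    generalize (CPSeries c (RtoC (t + h) * z)) (CPSeries c (RtoC t * z)) (CPSeries (CPS_derive c) (RtoC t * z)).
    intros p q r. unfold Re, Im. simpl. ring.
Qed.

End Derivatives.

Lemma is_derive_Rmult (f g : R -> R) (x df dg : R) : is_derive f x df -> is_derive g x dg ->
  is_derive (fun t => f t * g t) x (df * g x + f x * dg).
Proof. intros Hf Hg. apply is_derive_Reals. apply is_derive_Reals in Hf, Hg. now apply derivable_pt_lim_mult. Qed.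

Lemma is_derive_Rplus (f g : R -> R) (x df dg : R) : is_derive f x df -> is_derive g x dg ->
  is_derive (fun t => f t + g t) x (df + dg).
Proof. intros Hf Hg. apply is_derive_Reals. apply is_derive_Reals in Hf, Hg. now apply derivable_pt_lim_plus. Qed.

Lemma is_derive_Rminus (f g : R -> R) (x df dg : R) : is_derive f x df -> is_derive g x dg ->
  is_derive (fun t => f t - g t) x (df - dg).
Proof. intros Hf Hg. apply is_derive_Reals. apply is_derive_Reals in Hf, Hg. now apply derivable_pt_lim_minus. Qed.

Lemma is_derive_eq_compat (f : R -> R) (x l l' : R) : is_derive f x l -> l = l' -> is_derive f x l'.
Proof. now intros H <-. Qed.

Lemma MVT_interval (f df : R -> R) (a b : R) : a <= b ->
  (forall x, a <= x <= b -> is_derive f x (df x)) -> exists c, a <= c <= b /\ f b - f a = df c * (b - a).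
Proof.
  intros Hab Hd. destruct (MVT_gen f a b df) as (c & Hc & E); rewrite ?Rmin_left, ?Rmax_right in * by lra.
  - intros x Hx. apply Hd. lra.
  - intros x Hx. apply continuity_pt_filterlim, (ex_derive_continuous f). exists (df x). apply Hd. lra.
  - now exists c.
Qed.

Lemma nonincreasing_of_derive (f df : R -> R) (a b : R) : a <= b ->
  (forall x, a <= x <= b -> is_derive f x (df x)) -> (forall x, a <= x <= b -> df x <= 0) -> f b <= f a.
Proof.
  intros Hab Hd Hn. destruct (MVT_interval f df a b Hab Hd) as (c & Hc & E).
  specialize (Hn c Hc). nra.
Qed.

Lemma constant_of_derive_0 (f : R -> R) (a b : R) : (forall x, is_derive f x 0) -> f a = f b.
Proof.
  intros Hd. destruct (Rle_dec a b) as [Hab | Hab];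
    [ destruct (MVT_interval f (fun _ => 0) a b Hab (fun x _ => Hd x)) as (c & _ & E)
    | destruct (MVT_interval f (fun _ => 0) b a ltac:(lra) (fun x _ => Hd x)) as (c & _ & E) ]; lra.
Qed.

Definition exp_coef (n : nat) : C := RtoC (/ INR (fact n)).

Lemma fact_bounded_exp_coef : fact_bounded exp_coef 1 1.
Proof.
  repeat split; [lra | lra |]. intros n. unfold exp_coef. rewrite Cmod_R, pow1.
  pose proof (Rinv_0_lt_compat _ (INR_fact_pos n)). rewrite Rabs_right by lra. right. unfold Rdiv. ring.
Qed.

Lemma CPS_derive_exp_coef (n : nat) : CPS_derive exp_coef n = exp_coef n.
Proof.
  unfold CPS_derive, exp_coef. rewrite <- RtoC_mult. f_equal. rewrite fact_simpl, mult_INR.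
  pose proof (INR_fact_neq_0 n). pose proof (lt_0_INR (S n) (Nat.lt_0_succ n)). field. lra.
Qed.

Lemma cexp_opp_r (w : C) : (cexp w * cexp (- w))%C = RtoC 1.
Proof.
  destruct w as [p q]. unfold cexp. cbn [Re Im fst snd Copp]. rewrite cos_neg, sin_neg.
  pose proof (sin2_cos2 q) as SC. unfold Rsqr in SC.
  assert (E : exp p * exp (- p) = 1) by (rewrite <- exp_plus, Rplus_opp_r; apply exp_0).
  apply injective_projections; simpl; nra.
Qed.

(* [s |-> CPSeries exp_coef (s w) * cexp (- s w)] has derivative [0], so it is constantly [1]. *)
Lemma CPSeries_exp (w : C) : CPSeries exp_coef w = cexp w.
Proof.
  destruct w as [p q].
  set (P1 := fun s => Re (CPSeries exp_coef (RtoC s * (p, q)))).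
  set (P2 := fun s => Im (CPSeries exp_coef (RtoC s * (p, q)))).
  set (X1 := fun s => exp (- (s * p)) * cos (- (s * q))).
  set (X2 := fun s => exp (- (s * p)) * sin (- (s * q))).
  assert (DP : forall s, is_derive P1 s (p * P1 s - q * P2 s) /\ is_derive P2 s (p * P2 s + q * P1 s)).
  { intros s. destruct (is_derive_CPSeries_ray exp_coef 1 1 fact_bounded_exp_coef (p, q) s) as [D1 D2].
    rewrite (CPSeries_ext _ exp_coef _ CPS_derive_exp_coef) in D1, D2.
    split; (eapply is_derive_eq_compat; [eassumption|]); unfold P1, P2;
      [rewrite re_mult | rewrite im_mult]; reflexivity. }
  assert (DX1 : forall s, is_derive X1 s (- p * X1 s + q * X2 s))
    by (intros s; unfold X1, X2; auto_derive; [auto | ring]).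
  assert (DX2 : forall s, is_derive X2 s (- p * X2 s - q * X1 s))
    by (intros s; unfold X1, X2; auto_derive; [auto | ring]).
  assert (C1 : P1 0 * X1 0 - P2 0 * X2 0 = P1 1 * X1 1 - P2 1 * X2 1).
  { apply (constant_of_derive_0 (fun s => P1 s * X1 s - P2 s * X2 s)). intros s. destruct (DP s) as [D1 D2].
    eapply is_derive_eq_compat; [apply is_derive_Rminus; apply is_derive_Rmult; eauto | ring]. }
  assert (C2 : P1 0 * X2 0 + P2 0 * X1 0 = P1 1 * X2 1 + P2 1 * X1 1).
  { apply (constant_of_derive_0 (fun s => P1 s * X2 s + P2 s * X1 s)). intros s. destruct (DP s) as [D1 D2].
    eapply is_derive_eq_compat; [apply is_derive_Rplus; apply is_derive_Rmult; eauto | ring]. }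
  assert (E0 : CPSeries exp_coef (RtoC 0 * (p, q)) = RtoC 1).
  { rewrite Cmult_0_l, (CPSeries_0 _ _ _ fact_bounded_exp_coef). unfold exp_coef. simpl. now rewrite Rinv_1. }
  unfold P1, P2, X1, X2 in C1, C2. rewrite E0, Cmult_1_l in C1, C2.
  set (W := CPSeries exp_coef (p, q)) in *.
  assert (EW : (W * cexp (- (p, q)))%C = RtoC 1).
  { unfold cexp. cbn [Re Im fst snd Copp].
    rewrite !Rmult_0_l, !Rmult_1_l, Ropp_0, exp_0, cos_0, sin_0 in *.
    destruct W as [w1 w2]. simpl in *. apply injective_projections; simpl; lra. }
  rewrite <- (Cmult_1_r W), <- (cexp_opp_r (p, q)), Cmult_assoc, (Cmult_comm W), <- Cmult_assoc, EW.
  apply Cmult_1_r.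
Qed.

(** * Coefficient recurrences from Kummer's equation *)

Definition CPS_euler (c : nat -> C) (n : nat) : C := (RtoC (INR n) * c n)%C.

Section CauchyProduct.

Implicit Types (p q u v : nat -> C) (n : nat).

Lemma CPS_mult_ext_l u v q n : (forall k, u k = v k) -> CPS_mult u q n = CPS_mult v q n.
Proof. intros E. apply sum_n_C_ext. intros k _. now rewrite E. Qed.

Lemma CPS_mult_ext_r p u v n : (forall k, u k = v k) -> CPS_mult p u n = CPS_mult p v n.
Proof. intros E. apply sum_n_C_ext. intros k _. now rewrite E. Qed.

Lemma CPS_mult_plus_l u v q n : CPS_mult (fun k => u k + v k)%C q n = (CPS_mult u q n + CPS_mult v q n)%C.
Proof. unfold CPS_mult. rewrite <- sum_n_C_plus. apply sum_n_C_ext. intros k _. ring. Qed.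

Lemma CPS_mult_scal_l (x : C) u q n : CPS_mult (fun k => x * u k)%C q n = (x * CPS_mult u q n)%C.
Proof. unfold CPS_mult. rewrite <- sum_n_C_scal. apply sum_n_C_ext. intros k _. ring. Qed.

Lemma CPS_mult_scal_r (x : C) p u n : CPS_mult p (fun k => x * u k)%C n = (x * CPS_mult p u n)%C.
Proof. unfold CPS_mult. rewrite <- sum_n_C_scal. apply sum_n_C_ext. intros k _. ring. Qed.

Lemma CPS_mult_incr_1_l p q n : CPS_mult (CPS_incr_1 p) q n = CPS_incr_1 (CPS_mult p q) n.
Proof.
  unfold CPS_mult. destruct n as [|n]; [rewrite !sum_O; simpl; ring|].
  rewrite sum_n_C_Sn_l. simpl. ring_simplify. reflexivity.
Qed.

Lemma CPS_mult_incr_1_r p q n : CPS_mult p (CPS_incr_1 q) n = CPS_incr_1 (CPS_mult p q) n.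
Proof.
  unfold CPS_mult. destruct n as [|n]; [rewrite !sum_O; simpl; ring|].
  rewrite sum_n_C_Sn, Nat.sub_diag. simpl CPS_incr_1 at 2. rewrite Cmult_0_r, Cplus_0_r.
  apply sum_n_C_ext. intros k Hk. now rewrite Nat.sub_succ_l.
Qed.

Lemma CPS_euler_mult p q n : CPS_euler (CPS_mult p q) n = (CPS_mult (CPS_euler p) q n + CPS_mult p (CPS_euler q) n)%C.
Proof.
  unfold CPS_euler, CPS_mult. rewrite <- sum_n_C_scal, <- sum_n_C_plus. apply sum_n_C_ext. intros k Hk.
  rewrite minus_INR, RtoC_minus by exact Hk. ring.
Qed.

Lemma CPS_euler_incr_1 p n : CPS_euler (CPS_incr_1 p) n = (CPS_incr_1 (CPS_euler p) n + CPS_incr_1 p n)%C.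
Proof. unfold CPS_euler. destruct n as [|n]; cbn [CPS_incr_1]; [ring|]. rewrite S_INR, RtoC_plus. ring. Qed.

End CauchyProduct.

Lemma CPS_incr_1_ext (u v : nat -> C) (n : nat) : (forall k, u k = v k) -> CPS_incr_1 u n = CPS_incr_1 v n.
Proof. intros E. destruct n; [reflexivity | apply E]. Qed.

Definition mhalf_i : C := (- Ci / RtoC 2)%C.

(* On coefficients, [CPS_euler] is [z d/dz] and [CPS_incr_1] is multiplication by [z]. In ODE form:
   if [X' = -i/2 X] and [M(z)] solves Kummer's equation for [z |-> 1F1(a;b;iz)], then
   [e = M X] solves [z e'' + b e' = (i (a - b/2) - z/4) e]. *)
Section KummerProduct.

Variables (M X : nat -> C) (a : C) (b : R).
Hypothesis HX : forall n, CPS_euler X n = (mhalf_i * CPS_incr_1 X n)%C.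
Hypothesis HM : forall n, (CPS_euler (CPS_euler M) n + RtoC (b - 1) * CPS_euler M n)%C =
  (Ci * CPS_euler (CPS_incr_1 M) n + Ci * (a - 1) * CPS_incr_1 M n)%C.

Lemma CPS_mult_euler_exp (p : nat -> C) (n : nat) :
  CPS_mult p (CPS_euler X) n = (mhalf_i * CPS_incr_1 (CPS_mult p X) n)%C.
Proof. rewrite (CPS_mult_ext_r _ _ _ _ HX), CPS_mult_scal_r, CPS_mult_incr_1_r. reflexivity. Qed.

Lemma CPS_euler_mult_exp (p : nat -> C) (n : nat) :
  CPS_euler (CPS_mult p X) n = (CPS_mult (CPS_euler p) X n + mhalf_i * CPS_incr_1 (CPS_mult p X) n)%C.
Proof. now rewrite CPS_euler_mult, CPS_mult_euler_exp. Qed.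

Lemma kummer_product_recurrence (n : nat) :
  let e := CPS_mult M X in
  (CPS_euler (CPS_euler e) n + RtoC (b - 1) * CPS_euler e n)%C =
  (Ci * (a - RtoC b / 2) * CPS_incr_1 e n - / 4 * CPS_incr_1 (CPS_incr_1 e) n)%C.
Proof.
  intros e.
  assert (Hshe : forall k, CPS_mult (CPS_incr_1 M) X k = CPS_incr_1 e k) by (intros; apply CPS_mult_incr_1_l).
  assert (E2 : CPS_euler (CPS_euler e) n =
      (CPS_mult (CPS_euler (CPS_euler M)) X n + mhalf_i * CPS_incr_1 (CPS_mult (CPS_euler M) X) n
       + mhalf_i * CPS_euler (CPS_incr_1 e) n)%C).
  { unfold CPS_euler at 1. unfold e. rewrite CPS_euler_mult_exp, Cmult_plus_distr_l. fold e.
    fold (CPS_euler (CPS_mult (CPS_euler M) X) n). rewrite CPS_euler_mult_exp.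
    unfold CPS_euler; ring. }
  assert (E1 : CPS_mult (CPS_euler M) X n = (CPS_euler e n - mhalf_i * CPS_incr_1 e n)%C)
    by (unfold e; rewrite CPS_euler_mult_exp; ring).
  assert (Eshift : CPS_incr_1 (CPS_mult (CPS_euler M) X) n =
      (CPS_euler (CPS_incr_1 e) n - CPS_incr_1 e n - mhalf_i * CPS_incr_1 (CPS_incr_1 e) n)%C).
  { rewrite CPS_euler_incr_1. destruct n as [|n]; cbn [CPS_incr_1]; [ring|].
    unfold e. rewrite CPS_euler_mult_exp. ring. }
  assert (EM : CPS_mult (CPS_euler (CPS_incr_1 M)) X n =
      (CPS_euler (CPS_incr_1 e) n - mhalf_i * CPS_incr_1 (CPS_incr_1 e) n)%C).
  { pose proof (CPS_euler_mult_exp (CPS_incr_1 M) n) as H.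
    unfold CPS_euler at 1 in H. rewrite Hshe, (CPS_incr_1_ext _ _ n Hshe) in H.
    fold (CPS_euler (CPS_incr_1 e) n) in H. rewrite H. ring. }
  assert (HMX : (CPS_mult (CPS_euler (CPS_euler M)) X n + RtoC (b - 1) * CPS_mult (CPS_euler M) X n)%C =
      (Ci * CPS_mult (CPS_euler (CPS_incr_1 M)) X n + Ci * (a - 1) * CPS_mult (CPS_incr_1 M) X n)%C).
  { rewrite <- CPS_mult_scal_l, <- CPS_mult_plus_l, (CPS_mult_ext_l _ _ _ _ HM).
    now rewrite CPS_mult_plus_l, !CPS_mult_scal_l. }
  rewrite E2.
  replace (CPS_mult (CPS_euler (CPS_euler M)) X n) with
    (Ci * CPS_mult (CPS_euler (CPS_incr_1 M)) X n + Ci * (a - 1) * CPS_mult (CPS_incr_1 M) X n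
     - RtoC (b - 1) * CPS_mult (CPS_euler M) X n)%C by (rewrite <- HMX; ring).
  rewrite EM, Hshe, E1, Eshift. unfold mhalf_i. rewrite RtoC_minus.
  assert (Ci2 : (Ci * Ci + 1)%C = RtoC 0) by (apply injective_projections; simpl; ring).
  match goal with |- _ = ?R => transitivity (R + (Ci * Ci + 1) * / 4 * CPS_incr_1 (CPS_incr_1 e) n)%C end.
  - field.
  - rewrite Ci2. ring.
Qed.

End KummerProduct.

Definition kummer_coef (a b : C) (n : nat) : C := (poch a n / poch b n / RtoC (INR (fact n)))%C.

Definition kummer_i_coef (a b : C) (n : nat) : C := (kummer_coef a b n * Ci ^ n)%C.

Definition exp_mhalf_i_coef (n : nat) : C := (mhalf_i ^ n * exp_coef n)%C.

Definition E_coef (a : C) (b : R) : nat -> C := CPS_mult (kummer_i_coef a (RtoC b)) exp_mhalf_i_coef.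

Fixpoint rpoch (b : R) (n : nat) : R :=
  match n with O => 1 | S k => rpoch b k * (b + INR k) end.

Lemma poch_RtoC (b : R) (n : nat) : poch (RtoC b) n = RtoC (rpoch b n).
Proof. induction n as [|n IH]; simpl; [reflexivity | now rewrite IH, RtoC_mult, RtoC_plus]. Qed.

Lemma rpoch_pos (b : R) (n : nat) : 0 < b -> 0 < rpoch b n.
Proof. intros Hb. induction n; simpl; [lra | pose proof (pos_INR n); apply Rmult_lt_0_compat; lra]. Qed.

Lemma RtoC_neq_0 (x : R) : x <> 0 -> RtoC x <> RtoC 0.
Proof. intros Hx E. apply Hx. now injection E. Qed.

Section KummerCoefficients.

Variables (a : C) (b : R).
Hypothesis Hb : 0 < b.

Lemma fact_bounded_kummer_coef : fact_bounded (kummer_coef a (RtoC b)) 1 (1 + Cmod a / b).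
Proof.
  set (B := 1 + Cmod a / b).
  assert (HB : 1 <= B) by (unfold B; pose proof (Rdiv_le_0_compat _ _ (Cmod_ge_0 a) Hb); lra).
  assert (Hpoch : forall n, Cmod (poch a n) <= B ^ n * rpoch b n).
  { induction n as [|n IH]; simpl; [rewrite Cmod_1; lra|].
    rewrite Cmod_mult. pose proof (rpoch_pos b n Hb). pose proof (pos_INR n).
    assert (Cmod (a + RtoC (INR n)) <= B * (b + INR n)).
    { eapply Rle_trans; [apply Cmod_triangle|]. rewrite Cmod_R, Rabs_right by lra.
      replace (B * (b + INR n)) with (b + INR n + Cmod a + Cmod a * INR n / b) by (unfold B; field; lra).
      pose proof (Rdiv_le_0_compat _ _ (Rmult_le_pos _ _ (Cmod_ge_0 a) (pos_INR n)) Hb). lra. }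
    eapply Rle_trans; [apply Rmult_le_compat; eauto using Cmod_ge_0 | right; ring]. }
  repeat split; [lra | lra |]. intros n. unfold kummer_coef.
  pose proof (rpoch_pos b n Hb). pose proof (INR_fact_pos n).
  rewrite poch_RtoC, !Cmod_div, !Cmod_R, !Rabs_right by (try lra; apply RtoC_neq_0; lra).
  unfold Rdiv. rewrite Rmult_1_l. apply Rmult_le_compat_r; [left; now apply Rinv_0_lt_compat|].
  apply Rmult_le_reg_r with (rpoch b n); [lra|]. rewrite Rmult_assoc, Rinv_l, Rmult_1_r by lra. apply Hpoch.
Qed.

Lemma kummer_coef_S (k : nat) :
  (RtoC (INR (S k)) * (RtoC (INR k) + RtoC b) * kummer_coef a (RtoC b) (S k)
   = (a + RtoC (INR k)) * kummer_coef a (RtoC b) k)%C.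
Proof.
  unfold kummer_coef. simpl poch. rewrite fact_simpl, mult_INR, RtoC_mult, poch_RtoC.
  pose proof (rpoch_pos b k Hb). pose proof (INR_fact_pos k). pose proof (pos_INR k).
  pose proof (RtoC_neq_0 (rpoch b k) ltac:(lra)). pose proof (RtoC_neq_0 (INR (fact k)) ltac:(lra)).
  pose proof (RtoC_neq_0 (INR (S k)) ltac:(apply not_0_INR; lia)).
  assert (RtoC b + RtoC (INR k) <> RtoC 0)%C by (rewrite <- RtoC_plus; apply RtoC_neq_0; lra).
  field. tauto.
Qed.

Lemma kummer_i_coef_ode (n : nat) :
  let M := kummer_i_coef a (RtoC b) in
  (CPS_euler (CPS_euler M) n + RtoC (b - 1) * CPS_euler M n)%C =
  (Ci * CPS_euler (CPS_incr_1 M) n + Ci * (a - 1) * CPS_incr_1 M n)%C.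
Proof.
  cbv zeta. unfold CPS_euler. destruct n as [|k]; cbn [CPS_incr_1]; [simpl; ring|]. unfold kummer_i_coef.
  transitivity ((RtoC (INR (S k)) * (RtoC (INR k) + RtoC b) * kummer_coef a (RtoC b) (S k)) * Ci ^ S k)%C.
  - rewrite RtoC_minus, !S_INR, !RtoC_plus. ring.
  - rewrite kummer_coef_S, S_INR, RtoC_plus. simpl. ring.
Qed.

End KummerCoefficients.

Lemma exp_mhalf_i_coef_ode (n : nat) : CPS_euler exp_mhalf_i_coef n = (mhalf_i * CPS_incr_1 exp_mhalf_i_coef n)%C.
Proof.
  destruct n as [|k]; unfold CPS_euler; cbn [CPS_incr_1]; [simpl; ring|].
  unfold exp_mhalf_i_coef. rewrite <- (CPS_derive_exp_coef k). unfold CPS_derive. simpl. ring.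
Qed.

Lemma Cmod_mhalf_i : Cmod mhalf_i <= 1.
Proof.
  unfold mhalf_i. rewrite Cmod_div by (apply RtoC_neq_0; lra).
  rewrite Cmod_opp, Cmod_Ci, Cmod_R, Rabs_right by lra. lra.
Qed.

Lemma fact_bounded_exp_mhalf_i_coef : fact_bounded exp_mhalf_i_coef 1 1.
Proof.
  apply (fact_bounded_ext (fun n => exp_coef n * mhalf_i ^ n)%C); [intros n; unfold exp_mhalf_i_coef; ring|].
  exact (fact_bounded_geom _ _ _ _ fact_bounded_exp_coef Cmod_mhalf_i).
Qed.

Lemma fact_bounded_E_coef (a : C) (b : R) : 0 < b -> fact_bounded (E_coef a b) 1 (1 + Cmod a / b + 1).
Proof.
  intros Hb. rewrite <- (Rmult_1_l 1) at 1. apply fact_bounded_mult; [|exact fact_bounded_exp_mhalf_i_coef].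
  apply fact_bounded_geom; [now apply fact_bounded_kummer_coef | rewrite Cmod_Ci; lra].
Qed.

Lemma E_coef_0 (a : C) (b : R) : E_coef a b O = RtoC 1.
Proof.
  unfold E_coef, CPS_mult. rewrite sum_O.
  unfold kummer_i_coef, kummer_coef, exp_mhalf_i_coef, exp_coef. simpl.
  apply injective_projections; simpl; field.
Qed.

Lemma E_coef_S (a : C) (b : R) (n : nat) : 0 < b ->
  (RtoC (INR (S n)) * (RtoC (INR n) + RtoC b) * E_coef a b (S n))%C =
  (Ci * (a - RtoC b / 2) * E_coef a b n - / 4 * CPS_incr_1 (E_coef a b) n)%C.
Proof.
  intros Hb.
  pose proof (kummer_product_recurrence _ _ a b exp_mhalf_i_coef_ode (kummer_i_coef_ode a b Hb) (S n)) as H.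
  cbv zeta in H. fold (E_coef a b) in H. unfold CPS_euler in H. cbn [CPS_incr_1] in H.
  rewrite <- H, RtoC_minus, !S_INR, !RtoC_plus. ring.
Qed.

Lemma hyp1F1_CPSeries (a : C) (b : R) (w : C) : 0 < b -> hyp1F1 a (RtoC b) w = CPSeries (kummer_coef a (RtoC b)) w.
Proof.
  intros Hb. unfold hyp1F1. apply lim_sum_n_C.
  generalize (is_CPSeries_CPSeries _ _ _ w (fact_bounded_kummer_coef a b Hb)).
  apply is_Cseries_ext; [intros n; unfold hyp1F1_term, kummer_coef, Cdiv; ring | reflexivity].
Qed.

Lemma cexp_mhalf_i_CPSeries (z : C) : cexp (- (Ci * z) / RtoC 2)%C = CPSeries exp_mhalf_i_coef z.
Proof.
  replace (- (Ci * z) / RtoC 2)%C with (mhalf_i * z)%C by (unfold mhalf_i; field; apply RtoC_neq_0; lra).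
  rewrite <- CPSeries_exp, CPSeries_scal_arg. apply CPSeries_ext. intros n. unfold exp_mhalf_i_coef. ring.
Qed.

Lemma E_CPSeries (a : C) (b : R) (z : C) : 0 < b ->
  (hyp1F1 a (RtoC b) (Ci * z) * cexp (- (Ci * z) / RtoC 2))%C = CPSeries (E_coef a b) z.
Proof.
  intros Hb. rewrite hyp1F1_CPSeries, cexp_mhalf_i_CPSeries, CPSeries_scal_arg by exact Hb.
  symmetry. apply CPSeries_unique.
  assert (HM : fact_bounded (kummer_i_coef a (RtoC b)) 1 (1 + Cmod a / b))
    by (apply fact_bounded_geom; [now apply fact_bounded_kummer_coef | rewrite Cmod_Ci; lra]).
  exact (is_CPSeries_mult _ _ _ _ _ _ z HM fact_bounded_exp_mhalf_i_coef).
Qed.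

(** * Monotonicity along rays for the real solution *)

Lemma Rpower_pos (x y : R) : 0 < Rpower x y.
Proof. apply exp_pos. Qed.

Lemma le_0_of_le_Rpower_small (X K p t : R) : 0 <= K -> 0 < p -> 0 < t ->
  (forall e, 0 < e <= t -> X <= K * Rpower e p) -> X <= 0.
Proof.
  intros HK Hp Ht H. destruct (Rle_dec X 0) as [|HX]; [assumption|]. exfalso.
  set (d := X / (K + 1)). assert (Hd : 0 < d) by (apply Rdiv_lt_0_compat; lra).
  set (e := Rmin t (Rpower d (/ p))).
  assert (He : 0 < e) by (apply Rmin_pos; [exact Ht | apply Rpower_pos]).
  assert (Hed : Rpower e p <= d).
  { rewrite <- (Rpower_1 d Hd), <- (Rinv_l p) by lra. rewrite <- Rpower_mult.
    apply Rle_Rpower_l; [lra | split; [exact He | apply Rmin_r]]. }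
  specialize (H e (conj He (Rmin_l _ _))).
  assert (K * Rpower e p <= K * d) by (apply Rmult_le_compat_l; lra).
  assert (K * d < X).
  { unfold d. apply Rmult_lt_reg_r with (K + 1); [lra|].
    replace (K * (X / (K + 1)) * (K + 1)) with (K * X) by (field; lra). nra. }
  lra.
Qed.

Lemma is_derive_Im_mul_conj (U V : R -> C) (t : R) (dU dV : C) :
  is_derive (fun s => Re (U s)) t (Re dU) -> is_derive (fun s => Im (U s)) t (Im dU) ->
  is_derive (fun s => Re (V s)) t (Re dV) -> is_derive (fun s => Im (V s)) t (Im dV) ->
  is_derive (fun s => Im (V s * Cconj (U s))%C) t (Im (dV * Cconj (U t) + V t * Cconj dU)%C).
Proof.
  intros HUr HUi HVr HVi.
  pose proof (is_derive_Rminus _ _ _ _ _ (is_derive_Rmult _ _ _ _ _ HVi HUr) (is_derive_Rmult _ _ _ _ _ HVr HUi)) as H.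
  assert (E : forall s, Im (V s) * Re (U s) - Re (V s) * Im (U s) = Im (V s * Cconj (U s))%C)
    by (intros s; rewrite im_mult, re_conj, im_conj; ring).
  apply (is_derive_ext _ _ _ _ E). eapply is_derive_eq_compat; [exact H|].
  rewrite im_plus, !im_mult, !re_conj, !im_conj. ring.
Qed.

Lemma Im_mul_conj_perturb_le (p q dp dq : C) : Im p = 0 -> Im q = 0 ->
  Rabs (Im ((q + dq) * Cconj (p + dp)))%C <= Cmod q * Cmod dp + Cmod dq * Cmod p + Cmod dq * Cmod dp.
Proof.
  intros Hp Hq.
  replace ((q + dq) * Cconj (p + dp))%C with (q * Cconj p + (q * Cconj dp + dq * Cconj p + dq * Cconj dp))%C
    by (rewrite Cplus_conj; ring).
  rewrite im_plus, im_mult, im_conj, Hp, Hq, Ropp_0, Rmult_0_r, Rmult_0_l, !Rplus_0_l.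
  eapply Rle_trans; [apply Im_le_Cmod|].
  eapply Rle_trans; [apply Cmod_triangle|]. rewrite !Cmod_mult, !Cmod_conj.
  pose proof (Cmod_triangle (q * Cconj dp) (dq * Cconj p)). rewrite !Cmod_mult, !Cmod_conj in H. lra.
Qed.

Section KummerRealSolution.

Variables (g : nat -> C) (A B gam tau : R).
Hypothesis Hg : fact_bounded g A B.
Hypothesis Hrec : forall n,
  (RtoC (INR (S n)) * (RtoC (INR n) + RtoC (2 * gam)) * g (S n))%C = (- RtoC tau * g n - / 4 * CPS_incr_1 g n)%C.

Lemma CPSeries_kummer_ode (w : C) :
  (w * CPSeries (CPS_derive (CPS_derive g)) w + RtoC (2 * gam) * CPSeries (CPS_derive g) w
   + (w / 4 + RtoC tau) * CPSeries g w)%C = RtoC 0.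
Proof.
  pose proof (fact_bounded_derive _ _ _ Hg) as Hg1. pose proof (fact_bounded_derive _ _ _ Hg1) as Hg2.
  pose proof (is_Cseries_plus _ _ _ _
    (is_Cseries_plus _ _ _ _
      (is_CPSeries_incr_1 _ _ _ (is_CPSeries_CPSeries _ _ _ w Hg2))
      (is_Cseries_scal (RtoC (2 * gam)) _ _ (is_CPSeries_CPSeries _ _ _ w Hg1)))
    (is_Cseries_plus _ _ _ _
      (is_Cseries_scal (RtoC tau) _ _ (is_CPSeries_CPSeries _ _ _ w Hg))
      (is_Cseries_scal (/ 4)%C _ _ (is_CPSeries_incr_1 _ _ _ (is_CPSeries_CPSeries _ _ _ w Hg))))) as Hsum.
  replace (w * CPSeries (CPS_derive (CPS_derive g)) w + RtoC (2 * gam) * CPSeries (CPS_derive g) w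
           + (w / 4 + RtoC tau) * CPSeries g w)%C
    with (w * CPSeries (CPS_derive (CPS_derive g)) w + RtoC (2 * gam) * CPSeries (CPS_derive g) w
          + (RtoC tau * CPSeries g w + / 4 * (w * CPSeries g w)))%C by field.
  refine (is_Cseries_null _ _ _ Hsum). intros [|k]; cbv beta; unfold CPS_derive; cbn [CPS_incr_1].
  - pose proof (Hrec O) as H0. cbn [CPS_incr_1] in H0.
    transitivity ((RtoC (INR 1) * (RtoC (INR 0) + RtoC (2 * gam)) * g 1%nat
                   - (- RtoC tau * g O - / 4 * RtoC 0)) * w ^ 0)%C;
      [simpl; ring | rewrite H0; ring].
  - pose proof (Hrec (S k)) as H1. cbn [CPS_incr_1] in H1.
    transitivity ((RtoC (INR (S (S k))) * (RtoC (INR (S k)) + RtoC (2 * gam)) * g (S (S k))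
                   - (- RtoC tau * g (S k) - / 4 * g k)) * w ^ S k)%C.
    + rewrite !S_INR, !RtoC_plus. simpl. ring.
    + rewrite H1. ring.
Qed.

Variable z : C.
Hypothesis Hz : 0 < Im z.

Let U (t : R) : C := CPSeries g (RtoC t * z).
Let V (t : R) : C := CPSeries (CPS_derive g) (RtoC t * z).
Let energy (t : R) : R := Rpower t (2 * gam) * Im (V t * Cconj (U t)).

Lemma is_derive_energy (t : R) : 0 < t ->
  is_derive energy t (- (Rpower t (2 * gam) * Im z * (Cmod (U t) ^ 2 / 4 + Cmod (V t) ^ 2))).
Proof.
  intros Ht.
  pose proof (fact_bounded_derive _ _ _ Hg) as Hg1.
  set (W := fun t : R => CPSeries (CPS_derive (CPS_derive g)) (RtoC t * z)).
  destruct (is_derive_CPSeries_ray g A B Hg z t) as [DUr DUi].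
  destruct (is_derive_CPSeries_ray _ _ _ Hg1 z t) as [DVr DVi].
  pose proof (is_derive_Im_mul_conj U V t _ _ DUr DUi DVr DVi) as Dk.
  assert (Dp : is_derive (fun s => Rpower s (2 * gam)) t (2 * gam * Rpower t (2 * gam - 1)))
    by (apply is_derive_Reals, derivable_pt_lim_power, Ht).
  eapply is_derive_eq_compat; [exact (is_derive_Rmult _ _ _ _ _ Dp Dk)|].
  assert (Hpow : Rpower t (2 * gam) = Rpower t (2 * gam - 1) * t).
  { rewrite <- (Rpower_1 t Ht) at 3. rewrite <- Rpower_plus. f_equal. ring. }
  pose proof (CPSeries_kummer_ode (RtoC t * z)) as Hode.
  replace (RtoC t * z / 4)%C with (RtoC (t / 4) * z)%C in Hode by (apply injective_projections; simpl; field).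
  (* The two sides differ by [e * Im (ode * Cconj (U t))], where [ode] is the left side of [Hode]. *)
  cbv beta. fold (U t) (V t) (W t) in Hode |- *. rewrite Hpow, !Cmod2_alt.
  set (e := Rpower t (2 * gam - 1)).
  destruct (U t) as [u1 u2], (V t) as [v1 v2], (W t) as [w1 w2], z as [zr y].
  pose proof (f_equal Re Hode) as O1. pose proof (f_equal Im Hode) as O2.
  unfold Re, Im in *; simpl in *.
  apply (f_equal (Rmult u2)) in O1. apply (f_equal (Rmult u1)) in O2.
  apply (f_equal (Rmult e)) in O1, O2.
  lra.
Qed.

Lemma energy_nonincreasing (a b : R) : 0 < a -> a <= b -> energy b <= energy a.
Proof.
  intros Ha Hab.
  apply (nonincreasing_of_derive _
           (fun t => - (Rpower t (2 * gam) * Im z * (Cmod (U t) ^ 2 / 4 + Cmod (V t) ^ 2))) a b Hab).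
  - intros x Hx. apply is_derive_energy. lra.
  - intros x Hx. pose proof (Rpower_pos x (2 * gam)).
    pose proof (pow2_ge_0 (Cmod (U x))). pose proof (pow2_ge_0 (Cmod (V x))).
    assert (0 <= Rpower x (2 * gam) * Im z * (Cmod (U x) ^ 2 / 4 + Cmod (V x) ^ 2))
      by (apply Rmult_le_pos; [apply Rmult_le_pos |]; lra).
    lra.
Qed.

Lemma CPSeries_ray_sub_0_le (c : nat -> C) (A' B' : R) : fact_bounded c A' B' ->
  exists K, 0 <= K /\ forall t, 0 < t <= 1 -> Cmod (CPSeries c (RtoC t * z) - c O)%C <= K * t.
Proof.
  intros Hc. destruct (CPSeries_sub_0_le c A' B' (Cmod z) Hc) as (K & HK & Hle).
  exists (K * Cmod z). split; [apply Rmult_le_pos; [exact HK | apply Cmod_ge_0]|].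
  intros t Ht. assert (Hw : Cmod (RtoC t * z)%C = t * Cmod z) by (rewrite Cmod_mult, Cmod_R, Rabs_right; lra).
  eapply Rle_trans; [apply Hle|]; rewrite Hw; [pose proof (Cmod_ge_0 z); nra | right; ring].
Qed.

Hypothesis Hreal : forall n, Im (g n) = 0.

Lemma energy_le_Rpower : exists K, 0 <= K /\ forall t, 0 < t <= 1 -> energy t <= K * Rpower t (2 * gam + 1).
Proof.
  destruct (CPSeries_ray_sub_0_le g A B Hg) as (K0 & HK0 & HU).
  destruct (CPSeries_ray_sub_0_le _ _ _ (fact_bounded_derive _ _ _ Hg)) as (K1 & HK1 & HV).
  set (g1 := CPS_derive g O).
  assert (Hg1 : Im g1 = 0) by (unfold g1, CPS_derive; rewrite im_mult, Hreal; simpl; ring).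
  set (K := Cmod g1 * K0 + K1 * Cmod (g O) + K1 * K0).
  pose proof (Cmod_ge_0 g1). pose proof (Cmod_ge_0 (g O)).
  exists K. split; [unfold K; repeat apply Rplus_le_le_0_compat; apply Rmult_le_pos; lra|].
  intros t Ht. specialize (HU t Ht). specialize (HV t Ht).
  assert (Hk : Im (V t * Cconj (U t)) <= K * t).
  { replace (V t) with (g1 + (V t - g1))%C by ring. replace (U t) with (g O + (U t - g O))%C by ring.
    eapply Rle_trans; [apply Rle_abs|]. eapply Rle_trans; [apply Im_mul_conj_perturb_le; auto|].
    pose proof (Cmod_ge_0 (U t - g O)%C). pose proof (Cmod_ge_0 (V t - g1)%C).
    assert (Cmod (V t - g1)%C * Cmod (U t - g O)%C <= (K1 * t) * (K0 * t)) by (apply Rmult_le_compat; auto).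
    assert ((K1 * t) * (K0 * t) <= K1 * K0 * t).
    { pose proof (Rmult_le_pos _ _ HK1 HK0).
      replace ((K1 * t) * (K0 * t)) with ((K1 * K0 * t) * t) by ring.
      rewrite <- (Rmult_1_r (K1 * K0 * t)) at 2. apply Rmult_le_compat_l; [apply Rmult_le_pos|]; lra. }
    assert (Cmod g1 * Cmod (U t - g O)%C <= Cmod g1 * (K0 * t)) by (apply Rmult_le_compat_l; auto).
    assert (Cmod (V t - g1)%C * Cmod (g O) <= (K1 * t) * Cmod (g O)) by (apply Rmult_le_compat_r; auto).
    unfold K. lra. }
  unfold energy. rewrite Rpower_plus, Rpower_1 by lra. pose proof (Rpower_pos t (2 * gam)). nra.
Qed.

Hypothesis Hgam : -1/2 < gam.

Lemma energy_nonpos (t : R) : 0 < t <= 1 -> energy t <= 0.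
Proof.
  intros Ht. destruct energy_le_Rpower as (K & HK & Hle).
  apply (le_0_of_le_Rpower_small _ K (2 * gam + 1) t HK ltac:(lra) ltac:(lra)).
  intros e He. apply Rle_trans with (energy e); [apply energy_nonincreasing | apply Hle]; lra.
Qed.

Lemma CPSeries_ray_zeros_0 (c : nat -> C) (A' B' : R) : fact_bounded c A' B' ->
  (forall t, 0 < t <= 1 -> exists x, 0 < x <= t /\ CPSeries c (RtoC x * z) = RtoC 0) -> c O = RtoC 0.
Proof.
  intros Hc Hzeros. destruct (CPSeries_ray_sub_0_le c A' B' Hc) as (K & HK & Hle).
  apply Cmod_eq_0, Rle_antisym; [|apply Cmod_ge_0].
  apply (le_0_of_le_Rpower_small _ K 1 1 HK ltac:(lra) ltac:(lra)).
  intros t Ht. destruct (Hzeros t Ht) as (x & Hx & Hcx). specialize (Hle x ltac:(lra)).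
  rewrite Hcx in Hle. replace (RtoC 0 - c O)%C with (- c O)%C in Hle by ring.
  rewrite Cmod_opp in Hle. rewrite Rpower_1 by lra.
  eapply Rle_trans; [exact Hle | apply Rmult_le_compat_l; lra].
Qed.

Lemma energy_1_eq_0 : energy 1 = 0 -> g O = RtoC 0 /\ CPS_derive g O = RtoC 0.
Proof.
  intros H1.
  assert (Hzero : forall t, 0 < t <= 1 -> energy t = 0).
  { intros t Ht. apply Rle_antisym; [now apply energy_nonpos | rewrite <- H1; apply energy_nonincreasing; lra]. }
  assert (Hzeros : forall t, 0 < t <= 1 -> exists x, 0 < x <= t /\ U x = RtoC 0 /\ V x = RtoC 0).
  { intros t Ht.
    destruct (MVT_interval energy (fun x => - (Rpower x (2 * gam) * Im z * (Cmod (U x) ^ 2 / 4 + Cmod (V x) ^ 2)))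
                (t / 2) t ltac:(lra) ltac:(intros x Hx; apply is_derive_energy; lra)) as (x & Hx & E).
    rewrite !Hzero in E by lra.
    assert (Hsq : Cmod (U x) ^ 2 / 4 + Cmod (V x) ^ 2 = 0).
    { pose proof (Rpower_pos x (2 * gam)).
      apply Rmult_eq_reg_l with (Rpower x (2 * gam) * Im z * (t / 2)); [lra|].
      apply Rgt_not_eq, Rmult_lt_0_compat; [nra | lra]. }
    pose proof (Cmod_ge_0 (U x)). pose proof (Cmod_ge_0 (V x)).
    exists x. split; [lra|]. split; apply Cmod_eq_0; nra. }
  split.
  - apply (CPSeries_ray_zeros_0 g A B Hg). intros t Ht. destruct (Hzeros t Ht) as (x & Hx & HU & _). now exists x.
  - apply (CPSeries_ray_zeros_0 _ _ _ (fact_bounded_derive _ _ _ Hg)).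
    intros t Ht. destruct (Hzeros t Ht) as (x & Hx & _ & HV). now exists x.
Qed.

Theorem Im_CPSeries_derive_conj_nonpos :
  Im (CPSeries (CPS_derive g) z * Cconj (CPSeries g z)) <= 0 /\
  (Im (CPSeries (CPS_derive g) z * Cconj (CPSeries g z)) = 0 -> g O = RtoC 0 /\ CPS_derive g O = RtoC 0).
Proof.
  assert (E1 : energy 1 = Im (CPSeries (CPS_derive g) z * Cconj (CPSeries g z))).
  { unfold energy, U, V, Rpower. rewrite ln_1, Rmult_0_r, exp_0, Rmult_1_l, !Cmult_1_l. reflexivity. }
  rewrite <- E1. split; [apply energy_nonpos; lra | exact energy_1_eq_0].
Qed.

End KummerRealSolution.

(** * The real combination [G] *)

Section RealImagRecurrence.

Variables (r : nat -> C) (tau b : R).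
Hypothesis Hrec : forall n,
  (RtoC (INR (S n) * (INR n + b)) * r (S n))%C
  = ((((- tau)%R, (- (1 / 2))%R) : C) * r n - RtoC (/ 4) * CPS_incr_1 r n)%C.

Lemma Re_coef_S (n : nat) :
  INR (S n) * (INR n + b) * Re (r (S n)) = - tau * Re (r n) + Im (r n) / 2 - Re (CPS_incr_1 r n) / 4.
Proof.
  pose proof (f_equal Re (Hrec n)) as E. rewrite re_mult in E.
  destruct (r (S n)), (r n), (CPS_incr_1 r n). simpl in *. lra.
Qed.

Lemma Im_coef_S (n : nat) :
  INR (S n) * (INR n + b) * Im (r (S n)) = - tau * Im (r n) - Re (r n) / 2 - Im (CPS_incr_1 r n) / 4.
Proof.
  pose proof (f_equal Im (Hrec n)) as E. rewrite im_mult in E.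
  destruct (r (S n)), (r n), (CPS_incr_1 r n). simpl in *. lra.
Qed.

Lemma coef_Im_eq_derive_Re : 0 < b -> Im (r O) = 2 * Re (r 1%nat) ->
  forall n, Im (r n) = 2 * INR (S n) * Re (r (S n)).
Proof.
  intros Hb H0. pose proof Re_coef_S as Rx. pose proof Im_coef_S as Ry.
  enough (Hpair : forall n, Im (r n) = 2 * INR (S n) * Re (r (S n)) /\
                            Im (r (S n)) = 2 * INR (S (S n)) * Re (r (S (S n))))
    by (intros n; apply Hpair).
  induction n as [|n [IH0 IH1]].
  - split; [simpl; lra|].
    pose proof (Ry O) as E0. pose proof (Rx 1%nat) as E1. cbn [CPS_incr_1 Re Im fst snd] in E0, E1. simpl INR in *.
    change (Im (RtoC 0)) with 0 in E0. rewrite H0 in E0.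
    apply Rmult_eq_reg_l with (1 + b); [lra | lra].
  - split; [exact IH1|].
    pose proof (Ry (S n)) as E0. pose proof (Rx (S (S n))) as E1. cbn [CPS_incr_1] in E0, E1.
    rewrite IH0, IH1 in E0. rewrite !S_INR in *. pose proof (pos_INR n).
    set (N := INR n) in *.
    assert (E2 : (N + 1 + b) * Im (r (S (S n))) = - 2 * tau * Re (r (S (S n))) - Re (r (S n)) / 2).
    { apply Rmult_eq_reg_l with (N + 1 + 1); [|lra]. lra. }
    apply Rmult_eq_reg_l with (N + 1 + 1 + b); [|lra]. lra.
Qed.

End RealImagRecurrence.

Lemma RtoC_Im_mhalf_i (c : C) : RtoC (Im c) = (mhalf_i * (c - Cconj c))%C.
Proof. unfold mhalf_i. destruct c as [p q]. apply injective_projections; simpl; field. Qed.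

Lemma Im_mhalf_i_mul_conj (psi phi : C) :
  Im (mhalf_i * (psi - phi) * Cconj (psi + phi))%C = - (Cmod psi ^ 2 - Cmod phi ^ 2) / 2.
Proof. rewrite !Cmod2_alt. unfold mhalf_i. destruct psi as [p1 p2], phi as [f1 f2]. simpl. field. Qed.

Section MainCase.

Variables gam tau : R.
Hypothesis Hgam : -1/2 < gam.

Let a : C := (RtoC gam + Ci * RtoC tau)%C.
Let e : nat -> C := E_coef a (2 * gam + 1).
Let r (n : nat) : C := (Cconj a * e n)%C.
Let G_coef (n : nat) : C := RtoC (2 * Re (r n)).

Lemma conj_E_coef_S (n : nat) : (RtoC (INR (S n) * (INR n + (2 * gam + 1))) * r (S n))%C =
  ((((- tau)%R, (- (1 / 2))%R) : C) * r n - RtoC (/ 4) * CPS_incr_1 r n)%C.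
Proof.
  pose proof (E_coef_S a (2 * gam + 1) n ltac:(lra)) as H. fold e in H.
  replace (Ci * (a - RtoC (2 * gam + 1) / 2))%C with ((((- tau)%R, (- (1 / 2))%R) : C)) in H
    by (unfold a; apply injective_projections; simpl; field).
  replace (CPS_incr_1 r n) with (Cconj a * CPS_incr_1 e n)%C by (destruct n; simpl; [ring | reflexivity]).
  unfold r. rewrite RtoC_mult, RtoC_plus, RtoC_inv by lra.
  transitivity (Cconj a * (RtoC (INR (S n)) * (RtoC (INR n) + RtoC (2 * gam + 1)) * e (S n)))%C; [ring|].
  rewrite H. ring.
Qed.

Lemma Im_conj_E_coef (n : nat) : Im (r n) = 2 * INR (S n) * Re (r (S n)).
Proof.
  apply (coef_Im_eq_derive_Re r tau (2 * gam + 1) conj_E_coef_S ltac:(lra)).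
  assert (Hr0 : r O = Cconj a) by (unfold r, e; rewrite E_coef_0; ring).
  pose proof (conj_E_coef_S O) as H. cbn [CPS_incr_1] in H. rewrite Hr0 in H |- *.
  pose proof (f_equal Re H) as E. simpl INR in E. unfold a in E |- *. simpl in E |- *.
  apply Rmult_eq_reg_l with (2 * gam + 1); lra.
Qed.

Lemma G_coef_S (n : nat) :
  (RtoC (INR (S n)) * (RtoC (INR n) + RtoC (2 * gam)) * G_coef (S n))%C
  = (- RtoC tau * G_coef n - / 4 * CPS_incr_1 G_coef n)%C.
Proof.
  pose proof (Re_coef_S r tau (2 * gam + 1) conj_E_coef_S n) as E. pose proof (Im_conj_E_coef n) as I.
  replace (CPS_incr_1 G_coef n) with (RtoC (2 * Re (CPS_incr_1 r n)))
    by (destruct n; simpl; [f_equal; ring | reflexivity]).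
  unfold G_coef. rewrite <- (RtoC_inv 4) by lra. rewrite S_INR in *. revert E I.
  generalize (Re (r (S n))) (Re (r n)) (Im (r n)) (Re (CPS_incr_1 r n)). intros x1 x0 y0 xs E I.
  apply injective_projections; simpl; lra.
Qed.

Lemma CPS_derive_G_coef (n : nat) : CPS_derive G_coef n = RtoC (Im (r n)).
Proof. unfold CPS_derive, G_coef. rewrite <- RtoC_mult, Im_conj_E_coef. f_equal. ring. Qed.

Lemma G_coef_eq (n : nat) : G_coef n = (Cconj a * e n + a * Cconj (e n))%C.
Proof.
  unfold G_coef, r. replace (a * Cconj (e n))%C with (Cconj (Cconj a * e n)) by (rewrite Cmult_conj, Cconj_conj; ring).
  generalize (Cconj a * e n)%C. intros [p q]. apply injective_projections; simpl; ring.
Qed.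

Let E (z : C) : C := CPSeries e z.

Lemma G_coef_CPSeries (z : C) : exists A B, fact_bounded G_coef A B /\
  CPSeries G_coef z = (Cconj a * E z + a * Cconj (E (Cconj z)))%C /\
  CPSeries (CPS_derive G_coef) z = (mhalf_i * (Cconj a * E z - a * Cconj (E (Cconj z))))%C.
Proof.
  pose proof (fact_bounded_E_coef a (2 * gam + 1) ltac:(lra)) as He. fold e in He.
  eexists _, _. split.
  { apply (fact_bounded_ext _ _ _ _ (fun n => eq_sym (G_coef_eq n))).
    exact (fact_bounded_plus _ _ _ _ _ _ (fact_bounded_scal _ _ _ _ He)
             (fact_bounded_scal a _ _ _ (fact_bounded_conj _ _ _ He))). }
  pose proof (is_Cseries_scal (Cconj a) _ _ (is_CPSeries_CPSeries _ _ _ z He)) as Hz.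
  pose proof (is_Cseries_conj _ _ (is_CPSeries_CPSeries _ _ _ (Cconj z) He)) as Hcz.
  split; apply CPSeries_unique.
  - generalize (is_Cseries_plus _ _ _ _ Hz (is_Cseries_scal a _ _ Hcz)).
    apply is_Cseries_ext; [intros n | reflexivity].
    rewrite G_coef_eq, Cmult_conj, Cpow_conj, Cconj_conj. ring.
  - generalize (is_Cseries_scal mhalf_i _ _ (is_Cseries_plus _ _ _ _ Hz (is_Cseries_scal (- a)%C _ _ Hcz))).
    apply is_Cseries_ext; [intros n | unfold E; ring].
    rewrite CPS_derive_G_coef, RtoC_Im_mhalf_i. unfold r.
    rewrite !Cmult_conj, Cpow_conj, !Cconj_conj. ring.
Qed.

Theorem E_coef_CPSeries_conj_lt (z : C) : 0 < Im z -> ~ (gam = 0 /\ tau = 0) ->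
  Cmod (CPSeries (E_coef a (2 * gam + 1)) (Cconj z)) < Cmod (CPSeries (E_coef a (2 * gam + 1)) z).
Proof.
  intros Hz Ha. fold e (E z) (E (Cconj z)).
  destruct (G_coef_CPSeries z) as (A & B & Hg & HG & HG').
  assert (Hreal : forall n, Im (G_coef n) = 0) by reflexivity.
  destruct (Im_CPSeries_derive_conj_nonpos G_coef A B gam tau Hg G_coef_S z Hz Hreal Hgam) as [Hle Heq].
  rewrite HG, HG', Im_mhalf_i_mul_conj in Hle, Heq.
  set (psi := (Cconj a * E z)%C) in *. set (phi := (a * Cconj (E (Cconj z)))%C) in *.
  assert (Hlt : Cmod phi ^ 2 < Cmod psi ^ 2).
  { destruct (Rle_lt_dec (Cmod psi ^ 2) (Cmod phi ^ 2)) as [Hge | Hlt]; [exfalso | exact Hlt].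
    destruct (Heq ltac:(lra)) as [G0 G1]. apply Ha.
    rewrite CPS_derive_G_coef in G1. unfold G_coef, r, e in G0, G1. rewrite E_coef_0 in G0, G1.
    apply (f_equal Re) in G0. apply (f_equal Re) in G1. unfold a in G0, G1. simpl in G0, G1. lra. }
  unfold psi, phi in Hlt. rewrite !Cmod_mult, !Cmod_conj in Hlt.
  pose proof (Cmod_ge_0 (E z)). pose proof (Cmod_ge_0 a).
  destruct (Rlt_le_dec (Cmod (E (Cconj z))) (Cmod (E z))) as [Hok | Hge]; [exact Hok | exfalso].
  assert (Cmod a * Cmod (E z) <= Cmod a * Cmod (E (Cconj z))) by (apply Rmult_le_compat_l; lra).
  assert (0 <= Cmod a * Cmod (E z)) by (apply Rmult_le_pos; lra).
  nra.
Qed.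

End MainCase.

Lemma entire_ext (f g : C -> C) : (forall z, f z = g z) -> entire f -> entire g.
Proof. intros E Hf z. destruct (Hf z) as [l Hl]. exists l. exact (is_derive_ext _ _ _ _ E Hl). Qed.

Lemma entire_CPSeries (c : nat -> C) (A B : R) : fact_bounded c A B -> entire (CPSeries c).
Proof. intros Hc z. eexists. exact (is_derive_CPSeries c A B Hc z). Qed.

Lemma poch_0_S (n : nat) : poch (RtoC 0) (S n) = RtoC 0.
Proof. induction n as [|n IH]; [simpl; ring | cbn [poch] in *; rewrite IH; ring]. Qed.

Lemma hyp1F1_0_l (b : R) (w : C) : 0 < b -> hyp1F1 (RtoC 0) (RtoC b) w = RtoC 1.
Proof.
  intros Hb. rewrite (hyp1F1_CPSeries _ _ _ Hb), (CPSeries_const _ _ _ w (fact_bounded_kummer_coef (RtoC 0) b Hb)).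
  - unfold kummer_coef. simpl. apply injective_projections; simpl; field.
  - intros n. unfold kummer_coef. rewrite poch_0_S. unfold Cdiv. ring.
Qed.

Lemma Cmod_cexp (w : C) : Cmod (cexp w) = exp (Re w).
Proof.
  unfold cexp, Cmod. cbn [fst snd].
  replace ((exp (Re w) * cos (Im w)) ^ 2 + (exp (Re w) * sin (Im w)) ^ 2) with (exp (Re w) ^ 2).
  - apply sqrt_pow2. left. apply exp_pos.
  - pose proof (sin2_cos2 (Im w)) as SC. unfold Rsqr in SC. nra.
Qed.

Lemma Re_mul_Ci_div_2 (z : C) : Re (- (Ci * z) / RtoC 2)%C = Im z / 2.
Proof. destruct z as [p q]. simpl. field. Qed.

Lemma hermite_biehler_of_conj_lt (E : C -> C) : entire E ->
  (forall z, 0 < Im z -> Cmod (E (Cconj z)) < Cmod (E z)) -> hermite_biehler E.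
Proof.
  intros Hent Hlt. split; [exact Hent | split]; intros z Hz; specialize (Hlt z Hz);
    pose proof (Cmod_ge_0 (E (Cconj z))).
  - intros H0. rewrite H0, Cmod_0 in Hlt. lra.
  - lra.
Qed.

Theorem corollary2p6 (gamma tau : R) :
  (-1/2 < gamma)%R ->
  hermite_biehler
    (fun z : C =>
       (hyp1F1 (RtoC gamma + Ci * RtoC tau) (RtoC (2 * gamma + 1)) (Ci * z)
        * cexp (- (Ci * z) / RtoC 2))%C).
Proof.
  intros Hgam.
  assert (HE : forall z, (hyp1F1 (RtoC gamma + Ci * RtoC tau) (RtoC (2 * gamma + 1)) (Ci * z)
                          * cexp (- (Ci * z) / RtoC 2))%C
                         = CPSeries (E_coef (RtoC gamma + Ci * RtoC tau) (2 * gamma + 1)) z)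
    by (intros z; apply E_CPSeries; lra).
  apply hermite_biehler_of_conj_lt.
  - apply (entire_ext _ _ (fun z => eq_sym (HE z))).
    exact (entire_CPSeries _ _ _ (fact_bounded_E_coef _ (2 * gamma + 1) ltac:(lra))).
  - intros z Hz. destruct (Classical_Prop.classic (gamma = 0 /\ tau = 0)) as [[-> ->] | Ha].
    + replace (RtoC 0 + Ci * RtoC 0)%C with (RtoC 0) by ring.
      rewrite !hyp1F1_0_l, !Cmult_1_l, !Cmod_cexp, !Re_mul_Ci_div_2, im_conj by lra.
      apply exp_increasing. lra.
    + rewrite !HE. exact (E_coef_CPSeries_conj_lt gamma tau Hgam z Hz Ha).
Qed.
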